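(* In the $q$-sphere setting of the context, with parameters $\alpha,\beta\in\mathbb C$, $\delta\in\mathbb R\setminus\{0\}$ satisfying $\delta^2\alpha^*=\beta q^2$, let $\mu=q\delta^{-2}$ and define the inner product on $\mathcal{S}$ by $\langle\!\langle\overline{x_+f^++x_-f^-},y_+f^++y_-f^-\rangle\!\rangle=h(x_+^*y_++\mu\,x_-^*y_-)$, where $h$ is the Haar state of $\mathbb{C}_q[SU_2]$. Then the operator $D(xf^++yf^-)=\alpha q^{-1}(\partial_+y)f^++\beta q(\partial_-x)f^-$ is hermitian: $\langle\!\langle\overline{D\psi},\phi\rangle\!\rangle=\langle\!\langle\overline{\psi},D\phi\rangle\!\rangle$ for all $\psi,\phi\in\mathcal{S}$.
   Context: $q$ is a real nonzero number. $\mathbb{C}_q[SU_2]$ is the $*$-algebra generated by $a,b,c,d$ with $ba=qab$, $ca=qac$, $db=qbd$, $dc=qcd$, $bc=cb$, $da-ad=(q-q^{-1})bc$, $ad-q^{-1}bc=1$, graded by $|a|=|c|=1$, $|b|=|d|=-1$. It carries Woronowicz's left-covariant 3-dimensional $*$-calculus $\Omega^1$, free as a left module with basis $e^0,e^+,e^-$ of degrees $0,2,-2$, with $e^0x=q^{2|x|}xe^0$, $e^\pm x=q^{|x|}xe^\pm$ for homogeneous $x$, and $(e^\pm)^*=-q^{\mp1}e^\mp$. Let $\pi:\Omega^1\to\Omega^1_{hor}$ be the left-module projection killing $e^0$, and write $\pi{\rm d}x=(\partial_+x)e^++(\partial_-x)e^-$. $\mathbb{C}_q[S^2]$ is the degree-0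 subalgebra. The spinor bimodule is $\mathcal S=\mathcal S_+\oplus\mathcal S_-$, $\mathcal S_\pm=\{xf^\pm: x\in\mathbb C_q[SU_2],|x|=\mp1\}$, where $f^\pm$ are formal symbols commuting with $\mathbb C_q[S^2]$. The Haar state $h:\mathbb C_q[SU_2]\to\mathbb C$ is the unique bi-invariant normalised positive linear functional. *)

(* Concrete model of C_q[SU_2] as the free algebra on
   a,b,c,d modulo the two-sided ideal of its relations; elements of the free
   algebra are represented by formal finite sums (lists of (coefficient, word)). *)
From HB Require Import structures.
From mathcomp Require Import all_boot all_order all_algebra.
Set Implicit Arguments. Unset Strict Implicit. Unset Printing Implicit Defensive.
Import Order.TTheory GRing.Theory Num.Theory.
Local Open Scope ring_scope.

Inductive gen := Ga | Gb | Gc | Gd.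
Definition gen_eqb (x y : gen) : bool :=
  match x, y with
  | Ga, Ga | Gb, Gb | Gc, Gc | Gd, Gd => true | _, _ => false end.
Lemma gen_eqP : Equality.axiom gen_eqb.
Proof. by case; case; constructor. Qed.
HB.instance Definition _ := hasDecEq.Build gen gen_eqP.

Definition word := seq gen.

Section FreeAlg.
Variable C : numClosedFieldType.

Definition poly := seq (C * word).

Definition coef (p : poly) (w : word) : C := \sum_(t <- p | t.2 == w) t.1.
Definition pone : poly := [:: (1, [::])].
Definition pgen (g : gen) : poly := [:: (1, [:: g])].
Definition pword (w : word) : poly := [:: (1, w)].
Definition padd (p r : poly) : poly := p ++ r.
Definition pscale (k : C) (p : poly) : poly := [seq (k * t.1, t.2) | t <- p].
Definition psub (p r : poly) : poly := p ++ pscale (-1) r.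
Definition pmul (p r : poly) : poly :=
  [seq (s.1 * t.1, s.2 ++ t.2) | s <- p, t <- r].

Variable q : C.

Definition rels : seq poly :=
  [:: psub (pword [:: Gb; Ga]) (pscale q (pword [:: Ga; Gb]));
      psub (pword [:: Gc; Ga]) (pscale q (pword [:: Ga; Gc]));
      psub (pword [:: Gd; Gb]) (pscale q (pword [:: Gb; Gd]));
      psub (pword [:: Gd; Gc]) (pscale q (pword [:: Gc; Gd]));
      psub (pword [:: Gb; Gc]) (pword [:: Gc; Gb]);
      psub (psub (pword [:: Gd; Ga]) (pword [:: Ga; Gd]))
           (pscale (q - q^-1) (pword [:: Gb; Gc]));
      psub (psub (pword [:: Ga; Gd]) (pscale q^-1 (pword [:: Gb; Gc]))) pone].

Definition inIdeal (p : poly) : Prop :=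
  exists l : seq (C * word * nat * word),
    forall w, coef p w =
      coef (flatten [seq pscale t.1.1.1
                       (pmul (pmul (pword t.1.1.2) (nth [::] rels t.1.2))
                             (pword t.2) ) | t <- l]) w.

Definition qeq (p r : poly) : Prop := inIdeal (psub p r).

Definition degg (g : gen) : int :=
  match g with Ga | Gc => 1 | Gb | Gd => -1 end.
Definition degw (w : word) : int := \sum_(g <- w) degg g.
Definition homog (p : poly) (n : int) : bool := all (fun t => degw t.2 == n) p.

Definition starg (g : gen) : poly :=
  match g with
  | Ga => pgen Gd | Gb => pscale (- q) (pgen Gc)
  | Gc => pscale (- q^-1) (pgen Gb) | Gd => pgen Ga end.
Definition starw (w : word) : poly :=
  foldr (fun g acc => pmul acc (starg g)) pone w.
Definition pstar (p : poly) : poly :=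
  flatten [seq pscale (t.1)^* (starw t.2) | t <- p].

(* coproduct on words: Delta t_ij = sum_k t_ik (x) t_kj, t = (a b; c d) *)
Definition splitg (g : gen) : seq (gen * gen) :=
  match g with
  | Ga => [:: (Ga, Ga); (Gb, Gc)]
  | Gb => [:: (Ga, Gb); (Gb, Gd)]
  | Gc => [:: (Gc, Ga); (Gd, Gc)]
  | Gd => [:: (Gc, Gb); (Gd, Gd)] end.
Fixpoint delta (w : word) : seq (word * word) :=
  match w with
  | [::] => [:: ([::], [::])]
  | g :: w' => [seq (s.1 :: t.1, s.2 :: t.2) | s <- splitg g, t <- delta w']
  end.

Definition hlin (hw : word -> C) (p : poly) : C := \sum_(t <- p) t.1 * hw t.2.

Definition IsHaar (hw : word -> C) : Prop :=
  [/\ forall p, inIdeal p -> hlin hw p = 0,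
      hw [::] = 1,
      forall w, qeq [seq (hw t.2, t.1) | t <- delta w] [:: (hw w, [::])],
      forall w, qeq [seq (hw t.1, t.2) | t <- delta w] [:: (hw w, [::])]
    & forall p, 0 <= hlin hw (pmul (pstar p) p)].

(* Woronowicz 3D calculus: da = a e0 + q^-1 b e+, db = a e- - q^-2 b e0,
   dc = c e0 + q^-1 d e+, dd = c e- - q^-2 d e0;
   with e^pm y = q^{|y|} y e^pm this gives the twisted Leibniz rule
   d_pm(x y) = q^{|y|} (d_pm x) y + x d_pm y. *)
Definition dplusg (g : gen) : poly :=
  match g with
  | Ga => pscale q^-1 (pgen Gb) | Gc => pscale q^-1 (pgen Gd)
  | Gb | Gd => [::] end.
Definition dminusg (g : gen) : poly :=
  match g with
  | Gb => pgen Ga | Gd => pgen Gc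
  | Ga | Gc => [::] end.
Fixpoint dword (D : gen -> poly) (w : word) : poly :=
  match w with
  | [::] => [::]
  | g :: w' => pmul (pscale (q ^ degw w') (D g)) (pword w') ++
               pmul (pgen g) (dword D w')
  end.
Definition dpoly (D : gen -> poly) (p : poly) : poly :=
  flatten [seq pscale t.1 (dword D t.2) | t <- p].
Definition dplus := dpoly dplusg.
Definition dminus := dpoly dminusg.

(* spinors x f^+ + y f^- represented by the pair (x, y), |x| = -1, |y| = 1 *)
Definition spinor := (poly * poly)%type.
Definition in_S (psi : spinor) : bool := homog psi.1 (-1) && homog psi.2 1.

Definition Dirac (al be : C) (psi : spinor) : spinor :=
  (pscale (al * q^-1) (dplus psi.2), pscale (be * q) (dminus psi.1)).

Definition inner (hw : word -> C) (mu : C) (psi phi : spinor) : C :=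
  hlin hw (pmul (pstar psi.1) phi.1 ++ pscale mu (pmul (pstar psi.2) phi.2)).

End FreeAlg.

From Pilot Require Import Defs.
From mathcomp Require Import all_boot all_order all_algebra.
From mathcomp Require Import ring.
Set Implicit Arguments. Unset Strict Implicit. Unset Printing Implicit Defensive.
Import Order.TTheory GRing.Theory Num.Theory.
Local Open Scope ring_scope.

(* The Haar state kills both twisted derivations: on generators d_± is
   (id ⊗ X_±) Δ for a functional X_± that vanishes on 1 and on the relations,
   so applying X_± to the invariance identity (h ⊗ id) Δ w = h(w) 1 gives
   h (d_± w) = 0.  The star exchanges the derivations,
   (d_± x)^* = - q^(|x| ∓ 1) d_∓ (x^* ), and both obey the twisted Leibniz rule
   d (x y) = q^|y| (d x) y + x d y.  Applying h to d_∓ (y^* x) therefore moves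
   the derivation across the inner product, with a power of q fixed by the
   degrees of the spinor components, and δ² ᾱ = β q² is exactly the condition
   matching the two cross terms.
   Elements of the free algebra are never quotiented: they are handled through
   [hlin G] for arbitrary functionals G on words, and the relations enter only
   through h and through X_± annihilating the ideal they generate. *)

Lemma degw_cons g w : degw (g :: w) = degg g + degw w.
Proof. by rewrite /degw big_cons. Qed.

Lemma degw_cat u v : degw (u ++ v) = degw u + degw v.
Proof. by rewrite /degw big_cat. Qed.

Lemma conjCM (C : numClosedFieldType) (u v : C) : (u * v)^* = u^* * v^*.
Proof. exact: rmorphM. Qed.

Section LinearFunctionals.
Variable C : numClosedFieldType.
Implicit Types (G : word -> C) (p r : Defs.poly C).

Lemma hlinE G p : hlin G p = \sum_(t <- p) t.1 * G t.2.
Proof. by []. Qed.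

Lemma hlin_nil G : hlin G [::] = 0.
Proof. by rewrite /hlin big_nil. Qed.

Lemma hlin_cons G t p : hlin G (t :: p) = t.1 * G t.2 + hlin G p.
Proof. by rewrite /hlin big_cons. Qed.

Lemma hlin_cat G p r : hlin G (p ++ r) = hlin G p + hlin G r.
Proof. by rewrite /hlin big_cat. Qed.

Lemma hlin_scale G k p : hlin G (pscale k p) = k * hlin G p.
Proof. by rewrite /hlin big_map mulr_sumr; apply: eq_bigr => t _; rewrite mulrA. Qed.

Lemma hlin_psub G p r : hlin G (psub p r) = hlin G p - hlin G r.
Proof. by rewrite /psub hlin_cat hlin_scale mulN1r. Qed.

Lemma hlin_word G w : hlin G (pword C w) = G w.
Proof. by rewrite hlin_cons hlin_nil mul1r addr0. Qed.

Lemma eq_hlin G G' p : G =1 G' -> hlin G p = hlin G' p.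
Proof. by move=> eqG; apply: eq_bigr => t _; rewrite eqG. Qed.

Lemma hlin_scale_fun k G p : hlin (fun w => k * G w) p = k * hlin G p.
Proof. by rewrite /hlin mulr_sumr; apply: eq_bigr => t _; rewrite mulrCA. Qed.

Lemma hlin_sum_fun (I : Type) (s : seq I) (F : I -> word -> C) p :
  hlin (fun w => \sum_(i <- s) F i w) p = \sum_(i <- s) hlin (F i) p.
Proof. by rewrite /hlin exchange_big; apply: eq_bigr => t _; rewrite mulr_sumr. Qed.

Lemma hlin_flatten (I : Type) (s : seq I) (f : I -> C) (F : I -> Defs.poly C) G :
  hlin G (flatten [seq pscale (f i) (F i) | i <- s]) = \sum_(i <- s) f i * hlin G (F i).
Proof.
elim: s => [|i s IH] /=; first by rewrite hlin_nil big_nil.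
by rewrite hlin_cat IH hlin_scale big_cons.
Qed.

Lemma hlin_mul G p r :
  hlin G (pmul p r) = hlin (fun u => hlin (fun v => G (u ++ v)) r) p.
Proof.
rewrite /hlin /pmul big_allpairs_dep; apply: eq_bigr => s _.
by rewrite mulr_sumr; apply: eq_bigr => t _; rewrite mulrA.
Qed.

Lemma hlin_mul_scaler G k p r : hlin G (pmul p (pscale k r)) = k * hlin G (pmul p r).
Proof.
by rewrite !hlin_mul -hlin_scale_fun; apply: eq_hlin => u; rewrite hlin_scale.
Qed.

Lemma hlin_mul_wordl G u p : hlin G (pmul (pword C u) p) = hlin (fun v => G (u ++ v)) p.
Proof. by rewrite hlin_mul hlin_word. Qed.

Lemma hlin_mul_wordr G p v : hlin G (pmul p (pword C v)) = hlin (fun u => G (u ++ v)) p.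
Proof. by rewrite hlin_mul; apply: eq_hlin => u; rewrite hlin_word. Qed.

Lemma hlin_mul_genl G g p : hlin G (pmul (pgen C g) p) = hlin (fun v => G (g :: v)) p.
Proof. exact: (hlin_mul_wordl G [:: g]). Qed.

Lemma exchange_hlin (H : word -> word -> C) p r :
  hlin (fun u => hlin (H u) r) p = hlin (fun v => hlin (H^~ v) p) r.
Proof.
rewrite /hlin; under eq_bigr => s _ do rewrite mulr_sumr.
rewrite exchange_big; apply: eq_bigr => t _.
by rewrite mulr_sumr; apply: eq_bigr => s _; rewrite mulrCA.
Qed.

Lemma hlin_coef_seq G p (s : seq word) :
  uniq s -> {subset map snd p <= s} -> hlin G p = \sum_(w <- s) coef p w * G w.
Proof.
move=> us; elim: p => [|t p IH] sub_ps.
  by rewrite hlin_nil big1 // => w _; rewrite /coef big_nil mul0r.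
rewrite hlin_cons IH; last by move=> w wp; apply: sub_ps; rewrite /= inE wp orbT.
have ts : t.2 \in s by apply: sub_ps; rewrite /= inE eqxx.
have coef_cons w : coef (t :: p) w = (if t.2 == w then t.1 else 0) + coef p w.
  by rewrite /coef big_cons; case: ifP; rewrite ?add0r.
under [in RHS]eq_bigr => w _ do rewrite coef_cons mulrDl.
rewrite big_split /=; congr (_ + _).
rewrite (bigD1_seq t.2) //= eqxx big1 ?addr0 // => w /negbTE.
by rewrite eq_sym => ->; rewrite mul0r.
Qed.

Lemma eq_hlin_coef G p r : (forall w, coef p w = coef r w) -> hlin G p = hlin G r.
Proof.
move=> eq_pr; set s := undup (map snd (p ++ r)).
rewrite !(@hlin_coef_seq G _ s) ?undup_uniq //.
- by apply: eq_bigr => w _; rewrite eq_pr.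
all: by move=> w wp; rewrite mem_undup map_cat mem_cat wp ?orbT.
Qed.

Definition annihilates_ideal (q : C) G : Prop :=
  forall u i v, hlin G (pmul (pmul (pword C u) (nth [::] (rels q) i)) (pword C v)) = 0.

Lemma hlin_inIdeal q G p : annihilates_ideal q G -> inIdeal q p -> hlin G p = 0.
Proof.
move=> annG [l eq_p]; rewrite (eq_hlin_coef G eq_p) hlin_flatten big1 // => t _.
by rewrite annG mulr0.
Qed.

Lemma hlin_qeq q G p r : annihilates_ideal q G -> qeq q p r -> hlin G p = hlin G r.
Proof. by move=> annG /(hlin_inIdeal annG); rewrite hlin_psub => /subr0_eq. Qed.

End LinearFunctionals.

Section Coproduct.
Variables (C : numClosedFieldType) (q : C).
Hypothesis q0 : q != 0.
Implicit Types (G : word -> C) (w : word).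

(* The counit, and the character whose right convolution (id ⊗ chi) Δ is
   the grading automorphism x |-> q^|x| x. *)
Definition eps_gen (g : gen) : C := match g with Ga | Gd => 1 | _ => 0 end.
Definition chi_gen (g : gen) : C := match g with Ga => q | Gd => q^-1 | _ => 0 end.

Local Notation eps w := (\prod_(g <- w) eps_gen g).
Local Notation chi w := (\prod_(g <- w) chi_gen g).

Lemma splitg_eps g (F : gen -> C) : \sum_(s <- splitg g) eps_gen s.2 * F s.1 = F g.
Proof. by case: g; rewrite /= big_cons big_seq1 /=; ring. Qed.

Lemma splitg_chi g (F : gen -> C) :
  \sum_(s <- splitg g) chi_gen s.2 * F s.1 = q ^ degg g * F g.
Proof. by case: g; rewrite /= big_cons big_seq1 /= ?expr1z ?exprN1; ring. Qed.

Lemma coproduct_char (f c : gen -> C) :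
  (forall g (F : gen -> C), \sum_(s <- splitg g) f s.2 * F s.1 = c g * F g) ->
  forall w G, \sum_(t <- delta w) (\prod_(g <- t.2) f g) * G t.1 =
              (\prod_(g <- w) c g) * G w.
Proof.
move=> fc; elim=> [|g w IH] G; first by rewrite /= big_seq1 !big_nil mul1r.
rewrite /= big_allpairs_dep big_cons.
transitivity (\sum_(s <- splitg g) f s.2 * ((\prod_(h <- w) c h) * G (s.1 :: w))).
  apply: eq_bigr => s _; rewrite -(IH (fun u => G (s.1 :: u))) mulr_sumr.
  by apply: eq_bigr => t _; rewrite big_cons !mulrA.
by rewrite (fc g (fun h => (\prod_(h' <- w) c h') * G (h :: w))) mulrA.
Qed.

Lemma prod_exprz_degg w : \prod_(g <- w) q ^ degg g = q ^ degw w.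
Proof.
elim: w => [|g w IH]; first by rewrite /degw !big_nil.
by rewrite big_cons IH degw_cons expfzDr.
Qed.

Lemma coproduct_chi w G :
  \sum_(t <- delta w) chi t.2 * G t.1 = q ^ degw w * G w.
Proof. by rewrite (coproduct_char splitg_chi) prod_exprz_degg. Qed.

Fixpoint twisted_der (X : gen -> C) (w : word) : C :=
  if w is g :: w' then eps_gen g * twisted_der X w' + X g * chi w' else 0.

Lemma twisted_der_cat X u v :
  twisted_der X (u ++ v) = eps u * twisted_der X v + twisted_der X u * chi v.
Proof.
elim: u => [|g u IH] /=; first by rewrite big_nil mul1r mul0r addr0.
by rewrite IH !big_cons big_cat /=; ring.
Qed.

Lemma dword_coproduct D X :
  (forall g G, hlin G (D g) = \sum_(s <- splitg g) X s.2 * G [:: s.1]) ->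
  forall w G, hlin G (dword q D w) = \sum_(t <- delta w) twisted_der X t.2 * G t.1.
Proof.
move=> DX; elim=> [|g w IH] G; first by rewrite hlin_nil /= big_seq1 mul0r.
rewrite /= hlin_cat hlin_mul_wordr hlin_scale hlin_mul_genl IH big_allpairs_dep /=.
under [in RHS]eq_bigr => s _ do
  (under eq_bigr => t _ do rewrite mulrDl -!mulrA; rewrite big_split /= -!mulr_sumr).
rewrite big_split /= addrC.
rewrite (splitg_eps g (fun h => \sum_(t <- delta w) twisted_der X t.2 * G (h :: t.1))).
congr (_ + _); rewrite DX mulr_sumr; apply: eq_bigr => s _.
by rewrite (coproduct_chi w (fun u => G (s.1 :: u))) mulrCA.
Qed.

Lemma twisted_der_annihilates X :
  (forall i, hlin (fun w => eps w) (nth [::] (rels q) i) = 0) ->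
  (forall i, hlin (fun w => chi w) (nth [::] (rels q) i) = 0) ->
  (forall i, hlin (twisted_der X) (nth [::] (rels q) i) = 0) ->
  annihilates_ideal q (twisted_der X).
Proof.
move=> eps_rels chi_rels X_rels u i v; rewrite hlin_mul_wordr hlin_mul_wordl.
set r := nth _ _ i.
transitivity (eps u * twisted_der X v * hlin (fun w => eps w) r +
              eps u * chi v * hlin (twisted_der X) r +
              twisted_der X u * chi v * hlin (fun w => chi w) r).
  rewrite /hlin !mulr_sumr -!big_split; apply: eq_bigr => t _ /=.
  by rewrite !twisted_der_cat !big_cat /=; ring.
by rewrite eps_rels chi_rels X_rels !mulr0 !addr0.
Qed.

Lemma Haar_dword hw D X : IsHaar q hw ->
  (forall g G, hlin G (D g) = \sum_(s <- splitg g) X s.2 * G [:: s.1]) ->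
  annihilates_ideal q (twisted_der X) ->
  forall w, hlin hw (dword q D w) = 0.
Proof.
move=> [_ _ _ hw_inv _] DX annX w; rewrite (dword_coproduct DX).
transitivity (hlin (twisted_der X) [seq (hw t.1, t.2) | t <- delta w]).
  by rewrite /hlin big_map; apply: eq_bigr => t _; rewrite mulrC.
by rewrite (hlin_qeq annX (hw_inv w)) hlin_cons hlin_nil mulr0 addr0.
Qed.

(* On generators, d_- = (id ⊗ Xminus) Δ and d_+ = (id ⊗ Xplus) Δ. *)
Definition Xminus (g : gen) : C := if g is Gb then 1 else 0.
Definition Xplus (g : gen) : C := if g is Gc then q^-1 else 0.

Lemma rels_annihilated i : let r := nth [::] (rels q) i in
  [/\ hlin (fun w => eps w) r = 0, hlin (fun w => chi w) r = 0,
      hlin (twisted_der Xminus) r = 0 & hlin (twisted_der Xplus) r = 0].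
Proof.
case: i => [|[|[|[|[|[|[|i]]]]]]];
  rewrite /= /hlin /psub /pscale /pword /pone /= ?nth_nil;
  rewrite ?big_cons ?big_nil /= ?big_cons ?big_nil /=;
  by split; field.
Qed.

Lemma Haar_dminus hw : IsHaar q hw -> forall w, hlin hw (dword q (dminusg C) w) = 0.
Proof.
move=> hw_Haar; apply: (Haar_dword (X := Xminus) hw_Haar).
  by move=> g G; case: g; rewrite /= /hlin ?big_cons ?big_nil /=; ring.
by apply: twisted_der_annihilates => i; case: (rels_annihilated i).
Qed.

Lemma Haar_dplus hw : IsHaar q hw -> forall w, hlin hw (dword q (dplusg q) w) = 0.
Proof.
move=> hw_Haar; apply: (Haar_dword (X := Xplus) hw_Haar).
  by move=> g G; case: g; rewrite /= /hlin ?big_cons ?big_nil /=; ring.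
by apply: twisted_der_annihilates => i; case: (rels_annihilated i).
Qed.

End Coproduct.

Section Star.
Variables (C : numClosedFieldType) (q : C).
Implicit Types (G : word -> C) (p r : Defs.poly C).

Lemma pstar_cat p r : pstar q (p ++ r) = pstar q p ++ pstar q r.
Proof. by rewrite /pstar map_cat flatten_cat. Qed.

Lemma starw_cons g w : starw q (g :: w) = pmul (starw q w) (starg q g).
Proof. by []. Qed.

Lemma hlin_pstar G p : hlin G (pstar q p) = \sum_(t <- p) t.1^* * hlin G (starw q t.2).
Proof. exact: hlin_flatten. Qed.

Lemma hlin_pstar_scale G k p : hlin G (pstar q (pscale k p)) = k^* * hlin G (pstar q p).
Proof.
rewrite !hlin_pstar big_map mulr_sumr; apply: eq_bigr => t _.
by rewrite rmorphM mulrA.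
Qed.

Lemma hlin_pstar_word G w : hlin G (pstar q (pword C w)) = hlin G (starw q w).
Proof. by rewrite hlin_pstar big_seq1 conjC1 mul1r. Qed.

Lemma hlin_pstar_gen G g : hlin G (pstar q (pgen C g)) = hlin G (starg q g).
Proof.
by rewrite (hlin_pstar_word G [:: g]) starw_cons hlin_mul (hlin_word _ [::]).
Qed.

Lemma hlin_starw_cat G u v :
  hlin G (starw q (u ++ v)) = hlin (fun x => hlin (fun y => G (x ++ y)) (starw q u)) (starw q v).
Proof.
elim: u G => [|g u IH] G.
  by apply: eq_hlin => x; rewrite (hlin_word _ [::]) cats0.
rewrite cat_cons !starw_cons hlin_mul IH; apply: eq_hlin => x.
by rewrite hlin_mul; apply: eq_hlin => y; apply: eq_hlin => z; rewrite catA.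
Qed.

Lemma hlin_pstar_mul G p r :
  hlin G (pstar q (pmul p r)) = hlin (fun x => hlin (fun y => G (x ++ y)) (pstar q p)) (pstar q r).
Proof.
rewrite hlin_pstar /pmul big_allpairs_dep hlin_pstar.
under [in RHS]eq_bigr => t _ do
  rewrite (eq_hlin _ (fun x => hlin_pstar (fun y => G (x ++ y)) p)) hlin_sum_fun mulr_sumr.
rewrite [in RHS]exchange_big; apply: eq_bigr => s _; apply: eq_bigr => t _ /=.
by rewrite hlin_starw_cat hlin_scale_fun rmorphM mulrCA mulrA.
Qed.

Lemma hlin_pstar_flatten (I : Type) (s : seq I) (f : I -> C) (F : I -> Defs.poly C) G :
  hlin G (pstar q (flatten [seq pscale (f i) (F i) | i <- s])) =
  \sum_(i <- s) (f i)^* * hlin G (pstar q (F i)).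
Proof.
elim: s => [|i s IH] /=; first by rewrite big_nil hlin_nil.
by rewrite pstar_cat hlin_cat IH hlin_pstar_scale big_cons.
Qed.

Lemma hlin_mul_pstar_scale G k p r :
  hlin G (pmul (pstar q (pscale k p)) r) = k^* * hlin G (pmul (pstar q p) r).
Proof. by rewrite !hlin_mul hlin_pstar_scale. Qed.

End Star.

Section TwistedLeibniz.
Variables (C : numClosedFieldType) (q : C).
Hypothesis q0 : q != 0.
Implicit Types (G : word -> C) (p r : Defs.poly C) (D : gen -> Defs.poly C).

Lemma dpoly_cat D p r : dpoly q D (p ++ r) = dpoly q D p ++ dpoly q D r.
Proof. by rewrite /dpoly map_cat flatten_cat. Qed.

Lemma hlin_dpoly G D p : hlin G (dpoly q D p) = \sum_(t <- p) t.1 * hlin G (dword q D t.2).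
Proof. exact: hlin_flatten. Qed.

Lemma hlin_dpoly_scale G D k p : hlin G (dpoly q D (pscale k p)) = k * hlin G (dpoly q D p).
Proof. by rewrite !hlin_dpoly big_map mulr_sumr; apply: eq_bigr => t _; rewrite mulrA. Qed.

Lemma hlin_dpoly_flatten (I : Type) (s : seq I) (f : I -> C) (F : I -> Defs.poly C) G D :
  hlin G (dpoly q D (flatten [seq pscale (f i) (F i) | i <- s])) =
  \sum_(i <- s) f i * hlin G (dpoly q D (F i)).
Proof.
elim: s => [|i s IH] /=; first by rewrite big_nil hlin_nil.
by rewrite dpoly_cat hlin_cat IH hlin_dpoly_scale big_cons.
Qed.

Lemma hlin_dword_cat G D u v :
  hlin G (dword q D (u ++ v)) =
  q ^ degw v * hlin (fun x => G (x ++ v)) (dword q D u) +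
  hlin (fun x => G (u ++ x)) (dword q D v).
Proof.
elim: u G => [|g u IH] G /=; first by rewrite hlin_nil mulr0 add0r.
rewrite [LHS]hlin_cat [in RHS]hlin_cat !hlin_mul_wordr !hlin_scale !hlin_mul_genl.
rewrite (IH (fun x => G (g :: x))) degw_cat expfzDr //.
under [in RHS]eq_hlin => x do rewrite -catA.
by rewrite /=; ring.
Qed.

Lemma hlin_dpoly_mul G D n p r : homog r n ->
  hlin G (dpoly q D (pmul p r)) =
  q ^ n * hlin (fun x => hlin (fun y => G (x ++ y)) r) (dpoly q D p) +
  hlin (fun x => hlin (fun y => G (x ++ y)) (dpoly q D r)) p.
Proof.
move=> /allP homog_r; rewrite hlin_dpoly /pmul big_allpairs_dep exchange_hlin.
have -> : hlin (fun y => hlin (fun x => G (x ++ y)) (dpoly q D p)) r =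
    \sum_(s <- p) \sum_(t <- r) s.1 * t.1 * hlin (fun x => G (x ++ t.2)) (dword q D s.2).
  rewrite hlinE; under eq_bigr => t _ do rewrite hlin_dpoly mulr_sumr.
  by rewrite exchange_big; apply: eq_bigr => s _; apply: eq_bigr => t _; ring.
have -> : hlin (fun x => hlin (fun y => G (x ++ y)) (dpoly q D r)) p =
    \sum_(s <- p) \sum_(t <- r) s.1 * t.1 * hlin (fun y => G (s.2 ++ y)) (dword q D t.2).
  rewrite hlinE; apply: eq_bigr => s _; rewrite hlin_dpoly mulr_sumr.
  by apply: eq_bigr => t _; rewrite mulrA.
rewrite mulr_sumr -big_split; apply: eq_bigr => s _.
rewrite mulr_sumr -big_split /= big_seq [in RHS]big_seq; apply: eq_bigr => t tr.
by rewrite hlin_dword_cat (eqP (homog_r t tr)); ring.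
Qed.

End TwistedLeibniz.

Section StarDerivation.
Variables (C : numClosedFieldType) (q : C).
Hypotheses (q_real : q \is Num.real) (q0 : q != 0).
Implicit Types (G : word -> C) (D : gen -> Defs.poly C).

Lemma conj_exprz n : (q ^ n)^* = q ^ n.
Proof. by rewrite conj_Creal // rpredXz. Qed.

Lemma conj_invr : q^-1^* = q^-1.
Proof. by rewrite -exprN1 conj_exprz. Qed.

Definition star_intertwined D1 D2 (k : int) : Prop :=
  forall g G, hlin G (pstar q (D1 g)) = - q ^ (degg g + k) * hlin G (dpoly q D2 (starg q g)).

Lemma homog_starg g : homog (starg q g) (- degg g).
Proof. by case: g; rewrite /homog /= /degw big_seq1. Qed.

Lemma star_dword D1 D2 k : star_intertwined D1 D2 k ->
  forall w G, hlin G (pstar q (dword q D1 w)) =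
              - q ^ (degw w + k) * hlin G (dpoly q D2 (starw q w)).
Proof.
move=> D12; elim=> [|g w IH] G /=; first by rewrite hlin_nil mulr0.
rewrite pstar_cat hlin_cat !hlin_pstar_mul hlin_pstar_word IH.
rewrite (eq_hlin _ (fun x => hlin_pstar_gen q (fun y => G (x ++ y)) g)).
rewrite (eq_hlin _ (fun x => hlin_pstar_scale q (fun y => G (x ++ y)) _ (D1 g))).
rewrite hlin_scale_fun (eq_hlin _ (fun x => D12 g (fun y => G (x ++ y)))) hlin_scale_fun.
rewrite (hlin_dpoly_mul q0 _ _ _ (homog_starg g)) conj_exprz.
rewrite degw_cons !expfzDr // -invr_expz.
by field; rewrite expfz_neq0.
Qed.

Lemma star_dpoly D1 D2 k m y : star_intertwined D1 D2 k -> homog y m ->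
  forall G, hlin G (pstar q (dpoly q D1 y)) = - q ^ (m + k) * hlin G (dpoly q D2 (pstar q y)).
Proof.
move=> D12 /allP homog_y G; rewrite /dpoly hlin_pstar_flatten.
rewrite /pstar hlin_dpoly_flatten mulr_sumr big_seq [RHS]big_seq.
apply: eq_bigr => t yt; rewrite (star_dword D12) (eqP (homog_y t yt)).
by rewrite mulrCA.
Qed.

Lemma star_intertwined_dplus : star_intertwined (dplusg q) (dminusg C) (-1).
Proof.
move=> g G; case: g;
  rewrite /pstar /starw /dpoly /= /pscale /pgen /pone /= /hlin /= ?big_cons ?big_nil /=;
  rewrite /degw ?big_nil ?subrr ?expr0z ?mulr1 ?conj_invr ?rmorphM ?rmorph1 ?mulr0 //;
  by field.
Qed.

Lemma star_intertwined_dminus : star_intertwined (dminusg C) (dplusg q) 1.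
Proof.
move=> g G; case: g;
  rewrite /pstar /starw /dpoly /= /pscale /pgen /pone /= /hlin /= ?big_cons ?big_nil /=;
  rewrite /degw ?big_nil ?addNr ?expr0z ?mulr1 ?conj_invr ?rmorphM ?rmorph1 ?mulr0 //;
  by field.
Qed.

End StarDerivation.

Lemma Haar_integration_by_parts (C : numClosedFieldType) (q : C) (hw : word -> C)
    D1 D2 (k m n : int) y x :
  q \is Num.real -> q != 0 -> star_intertwined q D1 D2 k ->
  (forall w, hlin hw (dword q D2 w) = 0) -> homog y m -> homog x n ->
  hlin hw (pmul (pstar q (dpoly q D1 y)) x) =
  q ^ (m + k - n) * hlin hw (pmul (pstar q y) (dpoly q D2 x)).
Proof.
move=> q_real q0 D12 hw_D2 homog_y homog_x.
set Gx := fun u => hlin (fun v => hw (u ++ v)) x.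
have hw_dpoly p : hlin hw (dpoly q D2 p) = 0.
  by rewrite hlin_dpoly big1 // => t _; rewrite hw_D2 mulr0.
have leibniz := hlin_dpoly_mul q0 hw D2 (pstar q y) homog_x.
rewrite hw_dpoly -/Gx -hlin_mul in leibniz.
rewrite hlin_mul -/Gx (star_dpoly q_real q0 D12 homog_y).
have -> : hlin Gx (dpoly q D2 (pstar q y)) =
    - q ^ (- n) * hlin hw (pmul (pstar q y) (dpoly q D2 x)).
  apply: (mulfI (expfz_neq0 n q0)); rewrite mulrA mulrN -expfzDr // subrr expr0z.
  by rewrite mulN1r; apply/eqP; rewrite -addr_eq0 -leibniz.
by rewrite mulrA mulrNN -expfzDr.
Qed.

Lemma Dirac_coef_conj (C : numClosedFieldType) (q al be de : C) :
  q \is Num.real -> q != 0 -> de \is Num.real -> de != 0 ->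
  de ^+ 2 * al^* = be * q ^+ 2 ->
  al^* = be * q ^+ 2 / de ^+ 2 /\ be^* = de ^+ 2 * al / q ^+ 2.
Proof.
move=> q_real q0 de_real de0 hab; split; first by rewrite -hab mulrC mulKf // expf_neq0.
have /(congr1 (@Num.conj C)) := hab.
rewrite (conjCM (de ^+ 2)) (conjCM be) conjCK !(conj_Creal (rpredX 2 _)) // => ->.
by rewrite mulfK // expf_neq0.
Qed.

Theorem mainTheorem7 (C : numClosedFieldType) (q al be de : C)
    (hw : word -> C) (psi phi : spinor C) :
  q \is Num.real -> q != 0 ->
  de \is Num.real -> de != 0 ->
  de ^+ 2 * al^* = be * q ^+ 2 ->
  IsHaar q hw ->
  in_S psi -> in_S phi ->
  let mu := q / de ^+ 2 in
  inner q hw mu (Dirac q al be psi) phi = inner q hw mu psi (Dirac q al be phi).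
Proof.
move=> q_real q0 de_real de0 hab hw_Haar.
case: psi phi => [x y] [x' y'] /andP[homog_x homog_y] /andP[homog_x' homog_y'] mu.
rewrite /inner /Dirac /= !hlin_cat !hlin_scale !hlin_mul_pstar_scale !hlin_mul_scaler.
rewrite (Haar_integration_by_parts q_real q0 (star_intertwined_dplus q_real q0)
           (Haar_dminus q0 hw_Haar) homog_y homog_x').
rewrite (Haar_integration_by_parts q_real q0 (star_intertwined_dminus q0)
           (Haar_dplus q0 hw_Haar) homog_x homog_y').
rewrite /dplus /dminus /= (_ : 1 - 1 - -1 = 1) // (_ : -1 + 1 - 1 = -1) //.
have [conj_al conj_be] := Dirac_coef_conj q_real q0 de_real de0 hab.
rewrite !conjCM conj_al conj_be (conj_Creal q_real) (conj_invr q_real) /mu.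
by rewrite expr1z exprN1; field; rewrite de0 q0.
Qed.
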